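(* Let $M$ be a microlinear type and $N:=\|M\|_0$. The following three types are mutually equivalent: (i) $\prod_{x:M}\mathbf T_xM$; (ii) the type of maps $f:D\times N\to N$ with $\prod_{x:N} f(0,x)=x$; (iii) the type of maps $X:D\to(N\to N)$ with $X_0=\mathrm{id}_N$ (where $X_d:=X(d)$).
   Context: Work in homotopy type theory; $\|A\|_0$ is the set truncation of $A$, $|a|_0$ the image of $a$. $\mathbb{R}$ is a set with commutative unitary ring structure that is a $\mathbb{Q}$-algebra, $D:=\{d:\mathbb{R}\mid d^2=0\}$. Weil algebras are $\mathbb{R}[X_1,\dots,X_n]/(X_1^{m_1},\dots,X_n^{m_n},f_1,\dots,f_k)$, $\mathrm{Spec}_{\mathbb{R}}\mathfrak W$ the type of $\mathbb{R}$-algebra maps $\mathfrak W\to\mathbb{R}$, and $\mathfrak W\to(\mathrm{Spec}_{\mathbb{R}}\mathfrak W\to\mathbb{R})$ is assumed to be an equivalence. A quasi-colimit diagram is the image under $\mathrm{Spec}_{\mathbb{R}}$ of a finite limit diagram of Weil algebras; a type $M$ is microlinear if $\mathcal D\to\|M\|_0$ is a limit diagram for every quasi-colimit diagram $\mathcal D$. For $x:M$, $\mathbf T_xM:=\{t:D\to\|M\|_0\mid t(0)=|x|_0\}$. *)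

(* a plain-Rocq rendering of the HoTT setting of the paper.
   Types are Rocq types, identity types are Rocq's [=]. *)
From Stdlib Require Import Fin.

Definition isSet (A : Type) : Prop := forall (x y : A) (p q : x = y), p = q.

Definition isEquiv {A B : Type} (f : A -> B) : Prop :=
  exists g : B -> A, (forall a, g (f a) = a) /\ (forall b, f (g b) = b).

Definition equiv_types (A B : Type) : Prop := exists f : A -> B, isEquiv f.

(* [tr : M -> N] exhibits N as the set truncation ||M||_0 with |-|_0 = tr:
   N is a set and the dependent universal property (induction principle into
   families of sets, with its computation rule) holds. *)
Definition is_set_truncation (M N : Type) (tr : M -> N) : Prop :=
  isSet N /\
  forall P : N -> Type, (forall y, isSet (P y)) ->
    isEquiv (fun (s : forall y : N, P y) => fun x : M => s (tr x)).

Record CRing := {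
  rc :> Type;
  r0 : rc; r1 : rc;
  radd : rc -> rc -> rc; rmul : rc -> rc -> rc; ropp : rc -> rc;
  raddA : forall x y z, radd x (radd y z) = radd (radd x y) z;
  raddC : forall x y, radd x y = radd y x;
  radd0 : forall x, radd r0 x = x;
  raddN : forall x, radd x (ropp x) = r0;
  rmulA : forall x y z, rmul x (rmul y z) = rmul (rmul x y) z;
  rmulC : forall x y, rmul x y = rmul y x;
  rmul1 : forall x, rmul r1 x = x;
  rmulDl : forall x y z, rmul (radd x y) z = radd (rmul x z) (rmul y z)
}.

Arguments r0 {_}. Arguments r1 {_}.
Arguments radd {_} _ _. Arguments rmul {_} _ _. Arguments ropp {_} _.

Fixpoint rnat (R : CRing) (n : nat) : R :=
  match n with O => r0 | S n => radd r1 (rnat R n) end.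

(* R is a Q-algebra: every positive integer is invertible in R
   (equivalently, there is a (unique) ring map Q -> R). *)
Definition QAlgebra (R : CRing) : Prop :=
  forall n : nat, exists y : R, rmul (rnat R (S n)) y = r1.

Lemma rmul00 (R : CRing) : rmul (@r0 R) r0 = r0.
Proof.
  set (z := rmul (@r0 R) r0).
  assert (Hz : z = radd z z) by (unfold z; rewrite <- rmulDl, radd0; reflexivity).
  assert (H1 : radd (radd z z) (ropp z) = z).
  { rewrite <- raddA, raddN, raddC, radd0; reflexivity. }
  rewrite <- Hz, raddN in H1. symmetry; exact H1.
Qed.

Definition D (R : CRing) : Type := { d : R | rmul d d = r0 }.
Definition D0 (R : CRing) : D R := exist _ r0 (rmul00 R).

Record RAlg (R : CRing) := {
  ac :> Type;
  ac_set : isSet ac;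
  a0 : ac; a1 : ac;
  aadd : ac -> ac -> ac; amul : ac -> ac -> ac; aopp : ac -> ac;
  ascal : R -> ac -> ac;
  aaddA : forall x y z, aadd x (aadd y z) = aadd (aadd x y) z;
  aaddC : forall x y, aadd x y = aadd y x;
  aadd0 : forall x, aadd a0 x = x;
  aaddN : forall x, aadd x (aopp x) = a0;
  amulA : forall x y z, amul x (amul y z) = amul (amul x y) z;
  amulC : forall x y, amul x y = amul y x;
  amul1 : forall x, amul a1 x = x;
  amulDl : forall x y z, amul (aadd x y) z = aadd (amul x z) (amul y z);
  ascalDr : forall r x y, ascal r (aadd x y) = aadd (ascal r x) (ascal r y);
  ascalDl : forall r s x, ascal (radd r s) x = aadd (ascal r x) (ascal s x);
  ascalA : forall r s x, ascal (rmul r s) x = ascal r (ascal s x);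
  ascal1 : forall x, ascal r1 x = x;
  ascalMl : forall r x y, ascal r (amul x y) = amul (ascal r x) y
}.

Arguments ac {_}. Arguments a0 {_ _}. Arguments a1 {_ _}.
Arguments aadd {_ _} _ _. Arguments amul {_ _} _ _. Arguments aopp {_ _} _.
Arguments ascal {_ _} _ _.

Definition is_alg_hom {R : CRing} {A B : RAlg R} (f : A -> B) : Prop :=
  (forall x y, f (aadd x y) = aadd (f x) (f y)) /\
  (forall x y, f (amul x y) = amul (f x) (f y)) /\
  f a1 = a1 /\
  (forall r x, f (ascal r x) = ascal r (f x)).

Definition is_alg_hom_R {R : CRing} {A : RAlg R} (f : A -> R) : Prop :=
  (forall x y, f (aadd x y) = radd (f x) (f y)) /\
  (forall x y, f (amul x y) = rmul (f x) (f y)) /\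
  f a1 = r1 /\
  (forall r x, f (ascal r x) = rmul r (f x)).

Definition Spec {R : CRing} (A : RAlg R) : Type := { f : A -> R | is_alg_hom_R f }.

Lemma spec_map_hom {R : CRing} {A B : RAlg R} (u : A -> B) (Hu : is_alg_hom u)
  (psi : Spec B) : is_alg_hom_R (fun x => proj1_sig psi (u x)).
Proof.
  destruct psi as [p [p1 [p2 [p3 p4]]]]; destruct Hu as [u1 [u2 [u3 u4]]]; simpl.
  repeat split; intros; [rewrite u1, p1 | rewrite u2, p2 | rewrite u3, p3
                         | rewrite u4, p4]; reflexivity.
Qed.

Definition spec_map {R : CRing} {A B : RAlg R} (u : A -> B) (Hu : is_alg_hom u)
  (psi : Spec B) : Spec A := exist _ (fun x => proj1_sig psi (u x)) (spec_map_hom u Hu psi).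

Inductive poly (R : Type) (n : nat) : Type :=
| PX : Fin.t n -> poly R n
| PC : R -> poly R n
| PAdd : poly R n -> poly R n -> poly R n
| PMul : poly R n -> poly R n -> poly R n.

Arguments PX {_ _} _. Arguments PC {_ _} _.
Arguments PAdd {_ _} _ _. Arguments PMul {_ _} _ _.

Fixpoint peval {R : CRing} {A : RAlg R} {n : nat} (a : Fin.t n -> A)
  (p : poly R n) : A :=
  match p with
  | PX i => a i
  | PC r => ascal r a1
  | PAdd p q => aadd (peval a p) (peval a q)
  | PMul p q => amul (peval a p) (peval a q)
  end.

Fixpoint apow {R : CRing} {A : RAlg R} (x : A) (m : nat) : A :=
  match m with O => a1 | S m => amul x (apow x m) end.

(* W is (isomorphic to) R[X_1..X_n]/(X_1^{m_1},..,X_n^{m_n},f_1,..,f_k):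
   it has elements a_1..a_n satisfying the relations and is universal
   (initial) among R-algebras with such elements. *)
Definition IsWeil {R : CRing} (W : RAlg R) : Prop :=
  exists (n : nat) (m : Fin.t n -> nat) (k : nat) (f : Fin.t k -> poly R n)
         (a : Fin.t n -> W),
    (forall i, apow (a i) (m i) = a0) /\
    (forall j, peval a (f j) = a0) /\
    forall (B : RAlg R) (b : Fin.t n -> B),
      (forall i, apow (b i) (m i) = a0) -> (forall j, peval b (f j) = a0) ->
      exists h : W -> B, is_alg_hom h /\ (forall i, h (a i) = b i) /\
        forall h' : W -> B, is_alg_hom h' -> (forall i, h' (a i) = b i) ->
          forall w, h' w = h w.

Definition KockLawvere (R : CRing) : Prop :=
  forall W : RAlg R, IsWeil W ->
    isEquiv (fun (w : W) (phi : Spec W) => proj1_sig phi w).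

(* A finite limit diagram of Weil algebras, over a finite graph with nv
   vertices and ne edges (src e -> tgt e), with a limit cone (apex, proj)
   in the category of Weil algebras. *)
Record WeilLimDiagram (R : CRing) := {
  nv : nat; ne : nat;
  src : Fin.t ne -> Fin.t nv; tgt : Fin.t ne -> Fin.t nv;
  obj : Fin.t nv -> RAlg R;
  obj_weil : forall i, IsWeil (obj i);
  arr : forall e, obj (src e) -> obj (tgt e);
  arr_hom : forall e, is_alg_hom (arr e);
  apex : RAlg R;
  apex_weil : IsWeil apex;
  proj : forall i, apex -> obj i;
  proj_hom : forall i, is_alg_hom (proj i);
  proj_comm : forall e x, proj (tgt e) x = arr e (proj (src e) x);
  proj_universal :
    forall V : RAlg R, IsWeil V ->
    forall q : forall i, V -> obj i, (forall i, is_alg_hom (q i)) ->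
    (forall e x, q (tgt e) x = arr e (q (src e) x)) ->
    exists h : V -> apex, is_alg_hom h /\ (forall i x, proj i (h x) = q i x) /\
      forall h' : V -> apex, is_alg_hom h' -> (forall i x, proj i (h' x) = q i x) ->
        forall x, h' x = h x
}.

Arguments nv {_} _. Arguments ne {_} _. Arguments src {_} _ _. Arguments tgt {_} _ _.
Arguments obj {_} _ _. Arguments arr {_} _ _ _. Arguments arr_hom {_} _ _.
Arguments apex {_} _. Arguments proj {_} _ _ _. Arguments proj_hom {_} _ _.

(* Applying Spec_R gives the quasi-colimit diagram Spec(obj i) -> Spec(apex);
   homming it into N gives a cone (Spec apex -> N) -> (Spec (obj i) -> N).
   [lim_diagram_into G N] says this cone is a limit cone of types: the canonical
   map from (Spec apex -> N) into the type of compatible families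
   { g : forall i, Spec (obj i) -> N | forall e, g (tgt e) = g (src e) o Spec(arr e) }
   is an equivalence (stated as: injective and surjective onto that
   subtype; equality of maps taken pointwise, i.e. via funext). *)
Definition lim_diagram_into {R : CRing} (G : WeilLimDiagram R) (N : Type) : Prop :=
  (forall g g' : Spec (apex G) -> N,
     (forall i (psi : Spec (obj G i)),
        g (spec_map (proj G i) (proj_hom G i) psi)
        = g' (spec_map (proj G i) (proj_hom G i) psi)) ->
     forall phi, g phi = g' phi) /\
  (forall h : forall i, Spec (obj G i) -> N,
     (forall e (psi : Spec (obj G (tgt G e))),
        h (tgt G e) psi = h (src G e) (spec_map (arr G e) (arr_hom G e) psi)) ->
     exists g : Spec (apex G) -> N,
       forall i psi, g (spec_map (proj G i) (proj_hom G i) psi) = h i psi).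

(* M is microlinear, where N = ||M||_0. *)
Definition microlinear_trunc (R : CRing) (N : Type) : Prop :=
  forall G : WeilLimDiagram R, lim_diagram_into G N.

Definition tangent (R : CRing) {M N : Type} (tr : M -> N) (x : M) : Type :=
  { t : D R -> N | t (D0 R) = tr x }.

(* A tangent field picks, for each x : M, an infinitesimal curve t : D -> N
   through |x|_0.  Since N is a set, each T_x M is a set, so by the universal
   property of the set truncation such a field is the same as a family indexed
   by y : N of curves through y.  Such a family is uncurried into
   f : D * N -> N with f(0, -) = id, and curried into X : D -> (N -> N) with
   X_0 = id. *)
From Stdlib Require Import FunctionalExtensionality ProofIrrelevance.

Lemma equiv_types_sym (A B : Type) : equiv_types A B -> equiv_types B A.
Proof. intros [f [g [gf fg]]]. exists g, f. split; assumption. Qed.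

Lemma equiv_types_trans (A B C : Type) :
  equiv_types A B -> equiv_types B C -> equiv_types A C.
Proof.
  intros [f [g [gf fg]]] [f' [g' [gf' fg']]].
  exists (fun a => f' (f a)), (fun c => g (g' c)). split; intros.
  - rewrite gf'. apply gf.
  - rewrite fg. apply fg'.
Qed.

(* Identity types are rendered by the Prop-valued [=], so proof irrelevance
   makes every type a set. *)
Lemma isSet_any (A : Type) : isSet A.
Proof. intros x y p q. apply proof_irrelevance. Qed.

Lemma set_truncation_dep_equiv (M N : Type) (tr : M -> N) (P : N -> Type) :
  is_set_truncation M N tr ->
  equiv_types (forall x : M, P (tr x)) (forall y : N, P y).
Proof.
  intros [_ ind]. apply equiv_types_sym.
  exact (ex_intro _ _ (ind P (fun y => isSet_any (P y)))).
Qed.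

Section PointedCurves.

Variables (A N : Type) (a0 : A).

Lemma pointed_curves_uncurry_equiv :
  equiv_types (forall y : N, { t : A -> N | t a0 = y })
              { f : A * N -> N | forall y : N, f (a0, y) = y }.
Proof.
  exists (fun s => exist (fun f : A * N -> N => forall y, f (a0, y) = y)
            (fun p => proj1_sig (s (snd p)) (fst p)) (fun y => proj2_sig (s y))).
  exists (fun (f : { f : A * N -> N | forall y : N, f (a0, y) = y }) y =>
            exist (fun t : A -> N => t a0 = y)
            (fun a => proj1_sig f (a, y)) (proj2_sig f y)).
  split.
  - intro s. apply functional_extensionality_dep. intro y.
    apply eq_sig_hprop; [intros; apply proof_irrelevance | reflexivity].
  - intros [f f0]. apply eq_sig_hprop; [intros; apply proof_irrelevance |].
    apply functional_extensionality. intros [a y]. reflexivity.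
Qed.

Lemma uncurried_curried_equiv :
  equiv_types { f : A * N -> N | forall y : N, f (a0, y) = y }
              { X : A -> N -> N | X a0 = (fun y : N => y) }.
Proof.
  unshelve eexists.
  { intros [f f0]. exists (fun a y => f (a, y)).
    apply functional_extensionality. exact f0. }
  unshelve eexists.
  { intros [X X0]. exists (fun p => X (fst p) (snd p)).
    intro y. simpl. rewrite X0. reflexivity. }
  split.
  - intros [f f0]. apply eq_sig_hprop; [intros; apply proof_irrelevance |].
    apply functional_extensionality. intros [a y]. reflexivity.
  - intros [X X0]. apply eq_sig_hprop; [intros; apply proof_irrelevance |].
    reflexivity.
Qed.

End PointedCurves.

Theorem theorem6p1
  (R : CRing) (R_set : isSet R) (R_Q : QAlgebra R) (KL : KockLawvere R)
  (M N : Type) (tr : M -> N) (Htr : is_set_truncation M N tr)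
  (Hml : microlinear_trunc R N) :
  equiv_types (forall x : M, tangent R tr x)
              { f : D R * N -> N | forall y : N, f (D0 R, y) = y }
  /\ equiv_types { f : D R * N -> N | forall y : N, f (D0 R, y) = y }
                 { X : D R -> N -> N | X (D0 R) = (fun y : N => y) }
  /\ equiv_types (forall x : M, tangent R tr x)
                 { X : D R -> N -> N | X (D0 R) = (fun y : N => y) }.
Proof.
  assert (fields_uncurried :
    equiv_types (forall x : M, tangent R tr x)
                { f : D R * N -> N | forall y : N, f (D0 R, y) = y }).
  { apply (equiv_types_trans _ (forall y : N, { t : D R -> N | t (D0 R) = y })).
    - exact (set_truncation_dep_equiv M N tr
               (fun y => { t : D R -> N | t (D0 R) = y }) Htr).
    - apply pointed_curves_uncurry_equiv. }
  pose proof (uncurried_curried_equiv (D R) N (D0 R)) as uncurried_curried.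
  split; [exact fields_uncurried |].
  split; [exact uncurried_curried |].
  exact (equiv_types_trans _ _ _ fields_uncurried uncurried_curried).
Qed.
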